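(* Let $A:\mathbb{R}^n\to\mathbb{R}^m$ be a bounded linear operator, let $u^\dagger\in\mathbb{R}^n$ with $v:=Au^\dagger$, let $\wp>0$ with $\|u^\dagger-\Psi(v)\|\le\wp$. Let $\{v^\delta\}_{\delta>0}$ be noisy data with $\|v^\delta-v\|\le\delta$, and assume $\|\Psi(v^\delta)-\Psi(v)\|\to0$ as $\delta\to0$. Assume $C:=\eta-\frac{\eta_1}{\tau}-\nu_0(\wp+\nu_1)-\eta_0\eta_1>0$. Let $k_\delta$ be the discrepancy stopping index of the IRMGL+$\Psi$ iteration with noisy data $v^\delta$. Then there exists a solution $u^\dagger$ of $Au=v$ such that $$\lim_{\delta\to0}\|u_{k_\delta}^\delta-u^\dagger\|=0.$$
   Context: All norms are Euclidean, $A^*=A^\top$. Vectors $u\in\mathbb{R}^n$ are images: $n=pq$, pixel set $S=\{(i,j):1\le i\le p,1\le j\le q\}$, $u$ identified with $u:S\to\mathbb{R}$. Graph Laplacian built from $u$: fix $R>0$, $\sigma>0$, a distance $\eth$ on $S$; $g(a,b)=1$ if $0<\eth(a,b)\le R$, else $0$; $h_u(a,b)=\exp(-|u(a)-u(b)|^2/\sigma)$; $w_u=g\,h_u$; $W_u=[w_u(a,b)]$, $D_u=\mathrm{diag}(\sum_b w_u(a,b))$, $\Delta_u=D_u-W_u$. Noisy iteration: for a map $\Psi:\mathbb{R}^m\to\mathbb{R}^n$, $u_0^\delta=\Psi(v^\delta)$, $u_{k+1}^\delta=u_k^\delta-\alpha_k^\delta A^*(Au_k^\delta-v^\delta)-\beta_k^\delta\Delta_{u_k^\delta}u_k^\delta$,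 with constants $\eta_0,\eta_1,\nu_0,\nu_1,\nu_2>0$, $\alpha_k^\delta=\min\{\eta_0\|Au_k^\delta-v^\delta\|^2/\|A^*(Au_k^\delta-v^\delta)\|^2,\eta_1\}$ ($=\eta_1$ if the denominator vanishes), $\beta_k^\delta=\min\{\nu_0\|Au_k^\delta-v^\delta\|^2/\|\Delta_{u_k^\delta}u_k^\delta\|,\nu_1/\|\Delta_{u_k^\delta}u_k^\delta\|,\nu_2\}$ if $\Delta_{u_k^\delta}u_k^\delta\ne0$, else $0$. $\eta$ is a fixed constant with $0<\eta\le\min\{\eta_0/\|A\|^2,\eta_1\}$. With fixed $\tau>1$, $k_\delta=\min\{k\ge0:\|Au_k^\delta-v^\delta\|\le\tau\delta\}$. *)

From HB Require Import structures.
From mathcomp Require Import all_boot all_order all_algebra.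
From mathcomp Require Import all_classical all_reals all_analysis.
Set Implicit Arguments. Unset Strict Implicit. Unset Printing Implicit Defensive.
Import Order.TTheory GRing.Theory Num.Theory.
Local Open Scope ring_scope.
Local Open Scope classical_set_scope.

Section Defs.
Variable R : realType.

Definition norm2 (k : nat) (x : 'cV[R]_k) : R := Num.sqrt (\sum_i (x i 0) ^+ 2).

Definition opnorm (m n : nat) (A : 'M[R]_(m, n)) : R :=
  sup [set norm2 (A *m x) | x in [set x : 'cV[R]_n | norm2 x <= 1]].

(* pixel set S = {1..p} x {1..q}; the image u in R^(p*q) is identified with
   u : S -> R through the standard bijection of matrix.v (inverse of mxvec_index) *)
Definition pix (p q : nat) (k : 'I_(p * q)) : 'I_p * 'I_q :=
  enum_val (cast_ord (esym (mxvec_cast p q)) k).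

Definition is_distance (T : Type) (d : T -> T -> R) : Prop :=
  (forall a b, 0 <= d a b) /\ (forall a b, d a b = 0 <-> a = b) /\
  (forall a b, d a b = d b a) /\ (forall a b c, d a c <= d a b + d b c).

Section Graph.
Variables (p q : nat) (Rr sigma : R) (d : 'I_p * 'I_q -> 'I_p * 'I_q -> R).

Definition gfun (a b : 'I_(p * q)) : R :=
  if (0 < d (pix a) (pix b)) && (d (pix a) (pix b) <= Rr) then 1 else 0.

Definition hfun (u : 'cV[R]_(p * q)) (a b : 'I_(p * q)) : R :=
  expR (- ((u a 0 - u b 0) ^+ 2) / sigma).

Definition wfun (u : 'cV[R]_(p * q)) (a b : 'I_(p * q)) : R := gfun a b * hfun u a b.

Definition Wmat (u : 'cV[R]_(p * q)) : 'M[R]_(p * q) := \matrix_(a, b) wfun u a b.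
Definition Dmat (u : 'cV[R]_(p * q)) : 'M[R]_(p * q) :=
  diag_mx (\row_a \sum_b wfun u a b).
Definition Lap (u : 'cV[R]_(p * q)) : 'M[R]_(p * q) := Dmat u - Wmat u.
End Graph.

Section Iter.
Variables (m p q : nat) (A : 'M[R]_(m, p * q)) (Psi : 'cV[R]_m -> 'cV[R]_(p * q))
  (Rr sigma : R) (d : 'I_p * 'I_q -> 'I_p * 'I_q -> R)
  (eta0 eta1 nu0 nu1 nu2 : R).

Definition alpha_step (vd : 'cV[R]_m) (u : 'cV[R]_(p * q)) : R :=
  let r := A *m u - vd in
  let g := A^T *m r in
  if norm2 g == 0 then eta1
  else Num.min (eta0 * norm2 r ^+ 2 / norm2 g ^+ 2) eta1.

Definition beta_step (vd : 'cV[R]_m) (u : 'cV[R]_(p * q)) : R :=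
  let r := A *m u - vd in
  let L := Lap Rr sigma d u *m u in
  if L != 0 then
    Num.min (Num.min (nu0 * norm2 r ^+ 2 / norm2 L) (nu1 / norm2 L)) nu2
  else 0.

Definition step (vd : 'cV[R]_m) (u : 'cV[R]_(p * q)) : 'cV[R]_(p * q) :=
  u - alpha_step vd u *: (A^T *m (A *m u - vd)) - beta_step vd u *: (Lap Rr sigma d u *m u).

Definition irmgl (vd : 'cV[R]_m) (k : nat) : 'cV[R]_(p * q) := iter k (step vd) (Psi vd).

Definition is_stop_index (tau delta : R) (vd : 'cV[R]_m) (k : nat) : Prop :=
  norm2 (A *m irmgl vd k - vd) <= tau * delta /\
  (forall j, (j < k)%N -> tau * delta < norm2 (A *m irmgl vd j - vd)).
End Iter.
End Defs.

From HB Require Import structures.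
From mathcomp Require Import all_boot all_order all_algebra.
From mathcomp Require Import all_classical all_reals all_analysis.
From mathcomp Require Import ring lra.
Import Order.TTheory GRing.Theory Num.Theory.
Import numFieldNormedType.Exports.
Set Implicit Arguments. Unset Strict Implicit. Unset Printing Implicit Defensive.
Local Open Scope ring_scope.
Local Open Scope classical_set_scope.

Section Euclidean.
Variable R : realType.
Implicit Types k l : nat.

Definition dot k (x y : 'cV[R]_k) : R := (x^T *m y) 0 0.

Lemma dotE k (x y : 'cV[R]_k) : dot x y = \sum_i x i 0 * y i 0.
Proof. by rewrite /dot mxE; apply: eq_bigr => i _; rewrite mxE. Qed.

Lemma dotC k (x y : 'cV[R]_k) : dot x y = dot y x.
Proof. by rewrite !dotE; apply: eq_bigr => i _; rewrite mulrC. Qed.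

Lemma dotDl k (x y z : 'cV[R]_k) : dot (x + y) z = dot x z + dot y z.
Proof. by rewrite /dot raddfD mulmxDl mxE. Qed.

Lemma dotNl k (x y : 'cV[R]_k) : dot (- x) y = - dot x y.
Proof. by rewrite /dot raddfN mulNmx mxE. Qed.

Lemma dotZl k a (x y : 'cV[R]_k) : dot (a *: x) y = a * dot x y.
Proof. by rewrite /dot linearZ -scalemxAl mxE. Qed.

Lemma dotBl k (x y z : 'cV[R]_k) : dot (x - y) z = dot x z - dot y z.
Proof. by rewrite dotDl dotNl. Qed.

Lemma dotBr k (x y z : 'cV[R]_k) : dot z (x - y) = dot z x - dot z y.
Proof. by rewrite dotC dotBl !(dotC z). Qed.

Lemma dotDr k (x y z : 'cV[R]_k) : dot z (x + y) = dot z x + dot z y.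
Proof. by rewrite dotC dotDl !(dotC z). Qed.

Lemma dotZr k a (x y : 'cV[R]_k) : dot y (a *: x) = a * dot y x.
Proof. by rewrite dotC dotZl dotC. Qed.

Lemma dot0l k (y : 'cV[R]_k) : dot 0 y = 0.
Proof. by rewrite /dot linear0 mul0mx mxE. Qed.

Lemma dot_mulmx k l (M : 'M[R]_(k, l)) x y : dot (M *m x) y = dot x (M^T *m y).
Proof. by rewrite /dot trmx_mul mulmxA. Qed.

Lemma dot_ge0 k (x : 'cV[R]_k) : 0 <= dot x x.
Proof. by rewrite dotE; apply: sumr_ge0 => i _; rewrite -expr2 sqr_ge0. Qed.

Lemma norm2E k (x : 'cV[R]_k) : norm2 x = Num.sqrt (dot x x).
Proof. by rewrite dotE; congr Num.sqrt; apply: eq_bigr => i _; rewrite expr2. Qed.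

Lemma norm2_ge0 k (x : 'cV[R]_k) : 0 <= norm2 x.
Proof. exact: sqrtr_ge0. Qed.

Lemma norm2_sq k (x : 'cV[R]_k) : norm2 x ^+ 2 = dot x x.
Proof. by rewrite norm2E sqr_sqrtr // dot_ge0. Qed.

Lemma norm2_0 k : norm2 (0 : 'cV[R]_k) = 0.
Proof. by rewrite norm2E dot0l sqrtr0. Qed.

Lemma norm2_eq0 k (x : 'cV[R]_k) : norm2 x = 0 -> x = 0.
Proof.
move=> /eqP; rewrite sqrtr_eq0 => hle.
have sq_ge0 i : true -> 0 <= x i 0 ^+ 2 by rewrite sqr_ge0.
have sum0 : \sum_i x i 0 ^+ 2 = 0 by apply/eqP; rewrite eq_le hle sumr_ge0.
apply/matrixP => i j; rewrite (ord1 j) mxE; apply/eqP.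
by rewrite -sqrf_eq0 (psumr_eq0P sq_ge0 sum0).
Qed.

Lemma norm2Z k a (x : 'cV[R]_k) : norm2 (a *: x) = `|a| * norm2 x.
Proof. by rewrite !norm2E dotZl dotZr mulrA -expr2 sqrtrM ?sqr_ge0 // sqrtr_sqr. Qed.

Lemma norm2N k (x : 'cV[R]_k) : norm2 (- x) = norm2 x.
Proof. by rewrite -scaleN1r norm2Z normrN1 mul1r. Qed.

Lemma norm2_distC k (x y : 'cV[R]_k) : norm2 (x - y) = norm2 (y - x).
Proof. by rewrite -norm2N opprB. Qed.

Lemma norm2_subsq k (x y : 'cV[R]_k) :
  norm2 (x - y) ^+ 2 = norm2 x ^+ 2 - 2 * dot x y + norm2 y ^+ 2.
Proof. by rewrite !norm2_sq dotBl !dotBr (dotC y x); ring. Qed.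

Lemma dot_le_norm2 k (x y : 'cV[R]_k) : dot x y <= norm2 x * norm2 y.
Proof.
have [x0|xn0] := eqVneq (norm2 x) 0; first by rewrite x0 (norm2_eq0 x0) dot0l mul0r.
have [y0|yn0] := eqVneq (norm2 y) 0.
  by rewrite y0 (norm2_eq0 y0) dotC dot0l mulr0.
have xy_gt0 : 0 < norm2 x * norm2 y.
  by apply: mulr_gt0; rewrite lt0r ?xn0 ?yn0 norm2_ge0.
(* expand [0 <= |(norm2 y) x - (norm2 x) y|^2] *)
have := dot_ge0 (norm2 y *: x - norm2 x *: y).
rewrite dotBl !dotBr !dotZl !dotZr (dotC y x) -!norm2_sq.
nra.
Qed.

Lemma normr_dot_le k (x y : 'cV[R]_k) : `|dot x y| <= norm2 x * norm2 y.
Proof.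
rewrite ler_norml dot_le_norm2 andbT lerNl -dotNl.
by apply: le_trans (dot_le_norm2 _ _) _; rewrite norm2N.
Qed.

Lemma ler_norm2D k (x y : 'cV[R]_k) : norm2 (x + y) <= norm2 x + norm2 y.
Proof.
rewrite -ler_sqr ?nnegrE ?addr_ge0 ?norm2_ge0 // norm2_sq dotDl !dotDr.
rewrite (dotC y x) sqrrD !norm2_sq; have := dot_le_norm2 x y; lra.
Qed.

Lemma entry_le_norm2 k (x : 'cV[R]_k) i : `|x i 0| <= norm2 x.
Proof.
rewrite -sqrtr_sqr /norm2 ler_wsqrtr // (bigD1 i) //= lerDl.
by apply: sumr_ge0 => j _; rewrite sqr_ge0.
Qed.

Lemma norm2_le_sum k (x : 'cV[R]_k) : norm2 x <= \sum_i `|x i 0|.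
Proof.
have [x0|xn0] := eqVneq (norm2 x) 0; first by rewrite x0 sumr_ge0.
have x_gt0 : 0 < norm2 x by rewrite lt0r xn0 norm2_ge0.
rewrite -(ler_pM2r x_gt0) -expr2 norm2_sq dotE mulr_suml.
apply: ler_sum => i _; apply: le_trans (ler_norm _) _.
by rewrite normrM ler_wpM2l ?entry_le_norm2.
Qed.

Lemma mx_norm_le_norm2 k (x : 'cV[R]_k) : `|x| <= norm2 x.
Proof.
rewrite [leLHS]/Num.Def.normr /= mx_normrE; apply: bigmax_le => [|[i j] _ /=].
  exact: norm2_ge0.
by rewrite (ord1 j) entry_le_norm2.
Qed.

Lemma norm2_continuous k : continuous (@norm2 R k).
Proof.
have sq_entry i : continuous (fun x : 'cV[R]_k => x i 0 ^+ 2).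
  by move=> x; exact: (continuous_comp (@coord_continuous R k 1 i 0 x) (@exprn_continuous R 2 _)).
have sum_sq : continuous (fun x : 'cV[R]_k => \sum_i x i 0 ^+ 2).
  by apply: continuous_big; [exact: add_continuous | move=> i _; exact: sq_entry].
by move=> x; exact: (continuous_comp (sum_sq x) (@sqrt_continuous R _)).
Qed.

Lemma opnorm_has_sup k l (M : 'M[R]_(k, l)) :
  has_sup [set norm2 (M *m x) | x in [set x : 'cV[R]_l | norm2 x <= 1]].
Proof.
split; first by exists (norm2 (M *m 0)), 0 => //=; rewrite norm2_0.
exists (\sum_i norm2 (row i M)^T) => _ [x /= x_le1 <-].
apply: le_trans (norm2_le_sum _) _; apply: ler_sum => i _.
have -> : (M *m x) i 0 = dot (row i M)^T x by rewrite /dot trmxK -row_mul [RHS]mxE.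
apply: le_trans (normr_dot_le _ _) _.
by rewrite ler_piMr ?norm2_ge0.
Qed.

Lemma ler_opnorm k l (M : 'M[R]_(k, l)) x : norm2 (M *m x) <= opnorm M * norm2 x.
Proof.
have [x0|xn0] := eqVneq (norm2 x) 0.
  by rewrite x0 (norm2_eq0 x0) mulmx0 mulr0 norm2_0.
have x_gt0 : 0 < norm2 x by rewrite lt0r xn0 norm2_ge0.
have unit_x : norm2 ((norm2 x)^-1 *: x) <= 1.
  by rewrite norm2Z ger0_norm ?invr_ge0 ?norm2_ge0 // mulVf.
have := sup_upper_bound (opnorm_has_sup M) (ex_intro2 (fun y => norm2 y <= 1) _ _ unit_x erefl).
rewrite -scalemxAr norm2Z ger0_norm ?invr_ge0 ?norm2_ge0 // mulrC.
by rewrite -ler_pdivrMr.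
Qed.

Lemma opnorm_ge0 k l (M : 'M[R]_(k, l)) : 0 <= opnorm M.
Proof.
have zero_in : [set norm2 (M *m x) | x in [set x | norm2 x <= 1]] 0.
  by exists 0; rewrite /= ?mulmx0 norm2_0.
exact: (sup_upper_bound (opnorm_has_sup M) zero_in).
Qed.

Lemma ler_opnorm_tr k l (M : 'M[R]_(k, l)) y : norm2 (M^T *m y) <= opnorm M * norm2 y.
Proof.
set g := M^T *m y.
have [g0|gn0] := eqVneq (norm2 g) 0; first by rewrite g0 mulr_ge0 ?opnorm_ge0 ?norm2_ge0.
have g_gt0 : 0 < norm2 g by rewrite lt0r gn0 norm2_ge0.
rewrite -(ler_pM2r g_gt0) -expr2 norm2_sq {1}/g -dot_mulmx.
apply: le_trans (dot_le_norm2 _ _) _; rewrite mulrAC ler_wpM2r ?norm2_ge0 //.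
exact: ler_opnorm.
Qed.

End Euclidean.

Section Convergence.
Variables (R : realType) (T : Type) (F : set_system T).
Context {FF : Filter F}.

Lemma cvg_norm2P k (f : T -> 'cV[R]_k) (l : 'cV[R]_k) :
  f @ F --> l <-> norm2 (f x - l) @[x --> F] --> 0.
Proof.
split=> [fl | /cvgr0Pnorm_lt fl].
  rewrite -(norm2_0 R k) -(subrr l).
  exact: (@continuous_cvg _ _ _ F FF (fun x => f x - l) (@norm2 R k) (l - l)
    (@norm2_continuous R k _) (cvgB fl (cvg_cst l))).
apply/cvgrPdist_lt => e e0; near=> x.
rewrite -normrN opprB; apply: le_lt_trans (mx_norm_le_norm2 _) _.
by apply: le_lt_trans (ler_norm _) _; near: x; exact: fl.
Unshelve. all: by end_near. Qed.

Lemma cvg_norm2_lt k (f : T -> 'cV[R]_k) (l : 'cV[R]_k) :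
  f @ F --> l -> forall e, 0 < e -> \forall x \near F, norm2 (f x - l) < e.
Proof. by move=> /cvg_norm2P fl e e_gt0; exact: cvgr_lt _ fl _ e_gt0. Qed.

Lemma cvg_norm2 k (f : T -> 'cV[R]_k) l : f @ F --> l -> norm2 (f x) @[x --> F] --> norm2 l.
Proof. exact: (@continuous_cvg _ _ _ F FF f (@norm2 R k) l (@norm2_continuous R k l)). Qed.

Lemma cvg_col k (f : T -> 'cV[R]_k) (l : 'cV[R]_k) :
  (forall i, f x i 0 @[x --> F] --> l i 0) -> f @ F --> l.
Proof.
move=> fl; apply/cvg_norm2P.
apply: (squeeze_cvgr (f := cst 0) (h := fun x => \sum_i `|f x i 0 - l i 0|)).
- near=> x; rewrite norm2_ge0 /=; apply: le_trans (norm2_le_sum _) _.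
  by apply: ler_sum => i _; rewrite !mxE.
- exact: cvg_cst.
- have sum_cvg : \sum_i `|f x i 0 - l i 0| @[x --> F] --> \sum_(i < k) `|l i 0 - l i 0|.
    apply: (@cvg_big _ _ +%R 0 predT add_continuous _ F _ _ _ FF) => i _.
    exact: cvg_norm (cvgB (fl i) (cvg_cst (l i 0))).
  by rewrite big1 in sum_cvg => // i _; rewrite subrr normr0.
Unshelve. all: by end_near. Qed.

Lemma cvg_entry k (f : T -> 'cV[R]_k) (l : 'cV[R]_k) i :
  f @ F --> l -> f x i 0 @[x --> F] --> l i 0.
Proof. exact: (@continuous_cvg _ _ _ F FF f _ l (@coord_continuous R k 1 i 0 l)). Qed.

Lemma cvg_mulmx k n (M : 'M[R]_(n, k)) (f : T -> 'cV[R]_k) (l : 'cV[R]_k) :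
  f @ F --> l -> M *m f x @[x --> F] --> M *m l.
Proof.
move=> /cvg_norm2P fl; apply/cvg_norm2P.
apply: (squeeze_cvgr (f := cst 0) (h := fun x => opnorm M * norm2 (f x - l))).
- by near=> x; rewrite norm2_ge0 /= -mulmxBr ler_opnorm.
- exact: cvg_cst.
- by rewrite -(mulr0 (opnorm M)); apply: cvgM fl; exact: cvg_cst.
Unshelve. all: by end_near. Qed.

Lemma cvg_min (f h : T -> R) a c : f @ F --> a -> h @ F --> c ->
  Num.min (f x) (h x) @[x --> F] --> Num.min a c.
Proof.
move=> fa hc; apply: (continuous2_cvg FF (h := fun s t => Num.min s t)) fa hc.
exact: (@min_continuous _ R (_, _)).
Qed.

Lemma cvg_scale_bounded0 k (a : T -> R) (f : T -> 'cV[R]_k) (c : R) :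
  (forall x, `|a x| <= c) -> f @ F --> (0 : 'cV[R]_k) ->
  a x *: f x @[x --> F] --> (0 : 'cV[R]_k).
Proof.
move=> ac /cvgr0Pnorm_lt f0; apply/cvgr0Pnorm_lt => e e0.
have c1 : 0 < `|c| + 1 by rewrite ltr_pwDr.
near=> x; rewrite normrZ.
have fx : `|f x| < e / (`|c| + 1) by near: x; apply: f0; rewrite divr_gt0.
have ac' : `|a x| <= `|c| + 1 by apply: le_trans (ac x) _; rewrite ler_wpDr // ler_norm.
rewrite ltr_pdivlMr // in fx.
apply: le_lt_trans fx; rewrite mulrC ler_wpM2l //.
Unshelve. all: by end_near. Qed.

End Convergence.

Lemma near_at_right0P (R : realType) (P : R -> Prop) :
  (\forall d \near 0^'+, P d) <->
  exists d0, 0 < d0 /\ forall d, 0 < d -> d < d0 -> P d.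
Proof.
rewrite near_withinE; split.
  case/nbhs_ballP => d0 d0_gt0 near_P; exists d0; split=> // d d_gt0 d_lt.
  by apply: near_P => //; rewrite /ball /= sub0r normrN gtr0_norm.
case=> d0 [d0_gt0 near_P]; apply/nbhs_ballP; exists d0 => // d.
by rewrite /ball /= sub0r normrN => /ltr_normlW d_lt d_gt0; exact: near_P.
Qed.

Lemma bounded_seq_cluster (R : realType) k (u : nat -> 'cV[R]_k) (M : R) :
  (forall n, norm2 (u n) <= M) ->
  exists x, forall e, 0 < e -> forall N, exists2 n, (N <= n)%N & norm2 (u n - x) < e.
Proof.
move=> u_le.
pose S := [set w : 'rV[R]_k | forall i, `[- M, M] (w ord0 i)].
have S_compact : compact S.
  exact: (@rV_compact _ k (fun=> `[- M, M]%classic) (fun=> @segment_compact R (- M) M)).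
have trmx_continuous : continuous (@trmx R 1 k).
  move=> w; apply: (cvg_col (F := nbhs w)) => i; rewrite mxE.
  under eq_cvg do rewrite mxE.
  exact: (@coord_continuous R 1 k 0 i w).
have K_compact : compact (trmx @` S).
  by apply: continuous_compact S_compact; exact: continuous_subspaceT.
have [|x [_ x_cluster]] := K_compact (u @ \oo) _.
  exists 0%N => // n _; exists (u n)^T; last by rewrite trmxK.
  move=> i; rewrite mxE /= in_itv /= -ler_norml.
  exact: le_trans (entry_le_norm2 _ _) (u_le n).
exists x => e e_gt0 N.
have ball_x : nbhs x [set w | norm2 (w - x) < e].
  have dist_cvg0 : norm2 (w - x) @[w --> x] --> (0 : R).
    by apply/(cvg_norm2P (F := nbhs x)); exact: cvg_id.
  exact: cvgr_lt dist_cvg0 _ e_gt0.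
have tail : (u @ \oo) [set w | exists2 n, (N <= n)%N & u n = w].
  by apply: filterS (nbhs_infty_ge N) => n Nn; exists n.
have [_ [[n Nn <-] un_x]] := x_cluster _ _ tail ball_x.
by exists n.
Qed.

Lemma near_forall_leq (T : Type) (F : set_system T) {FF : Filter F} (P : nat -> T -> Prop) K :
  (forall k, \forall x \near F, P k x) ->
  \forall x \near F, forall k, (k <= K)%N -> P k x.
Proof.
move=> near_P; have := @filter_forall T 'I_K.+1 (fun i => P i) F FF (fun i => near_P i).
by apply: filterS => x P_x k kK; exact: (P_x (Ordinal (kK : (k < K.+1)%N))).
Qed.

Lemma Lap_mul_entry (R : realType) p q (Rr sigma : R) d (u : 'cV[R]_(p * q)) a :
  (Lap Rr sigma d u *m u) a 0 = \sum_b wfun Rr sigma d u a b * (u a 0 - u b 0).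
Proof.
rewrite /Lap mulmxBl mxE /Dmat mul_diag_mx !mxE big_distrl -sumrB.
by apply: eq_bigr => b _; rewrite /Wmat !mxE mulrBr.
Qed.

Section StepSizes.
Variables (R : realType) (m p q : nat) (A : 'M[R]_(m, p * q))
  (Rr sigma : R) (d : 'I_p * 'I_q -> 'I_p * 'I_q -> R)
  (eta0 eta1 nu0 nu1 nu2 : R).
Hypotheses (eta0_ge0 : 0 <= eta0) (eta1_ge0 : 0 <= eta1) (nu0_ge0 : 0 <= nu0)
  (nu1_ge0 : 0 <= nu1) (nu2_ge0 : 0 <= nu2).
Variables (y : 'cV[R]_m) (u : 'cV[R]_(p * q)).

Local Notation r := (A *m u - y).
Local Notation g := (A^T *m (A *m u - y)).
Local Notation L := (Lap Rr sigma d u *m u).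
Local Notation alpha := (alpha_step A eta0 eta1 y u).
Local Notation beta := (beta_step A Rr sigma d nu0 nu1 nu2 y u).

Lemma alpha_step_ge0 : 0 <= alpha.
Proof.
rewrite /alpha_step; case: ifP => // _.
by rewrite le_min eta1_ge0 andbT divr_ge0 ?mulr_ge0 ?norm2_ge0.
Qed.

Lemma alpha_step_le : alpha <= eta1.
Proof. by rewrite /alpha_step; case: ifP => // _; rewrite ge_min lexx orbT. Qed.

Lemma alpha_step_grad_le : alpha * norm2 g ^+ 2 <= eta0 * norm2 r ^+ 2.
Proof.
rewrite /alpha_step; case: ifPn => [/eqP -> | g_neq0].
  by rewrite expr0n mulr0 mulr_ge0 ?sqr_ge0.
have g2_gt0 : 0 < norm2 g ^+ 2 by rewrite exprn_gt0 // lt0r g_neq0 norm2_ge0.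
apply: le_trans (_ : eta0 * norm2 r ^+ 2 / norm2 g ^+ 2 * norm2 g ^+ 2 <= _).
  by rewrite ler_wpM2r ?ge_min ?lexx // ltW.
by rewrite divfK ?gt_eqF.
Qed.

Lemma alpha_step_ge eta : 0 <= eta -> eta * opnorm A ^+ 2 <= eta0 -> eta <= eta1 ->
  eta <= alpha.
Proof.
move=> eta_ge0 eta_opnorm eta_le; rewrite /alpha_step; case: ifPn => // g_neq0.
have g2_gt0 : 0 < norm2 g ^+ 2 by rewrite exprn_gt0 // lt0r g_neq0 norm2_ge0.
rewrite le_min eta_le andbT ler_pdivlMr //.
apply: le_trans (_ : eta * (opnorm A ^+ 2 * norm2 r ^+ 2) <= _).
  apply: ler_wpM2l => //; rewrite -exprMn lerXn2r ?nnegrE ?norm2_ge0 //.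
    by rewrite mulr_ge0 ?opnorm_ge0 ?norm2_ge0.
  exact: ler_opnorm_tr.
by rewrite mulrA ler_wpM2r ?sqr_ge0.
Qed.

Lemma beta_step_ge0 : 0 <= beta.
Proof.
rewrite /beta_step; case: ifP => // _.
by rewrite !le_min nu2_ge0 !mulr_ge0 ?invr_ge0 ?sqr_ge0 ?norm2_ge0.
Qed.

Lemma beta_step_le : beta <= nu2.
Proof. by rewrite /beta_step; case: ifP => // _; rewrite ge_min lexx orbT. Qed.

Lemma beta_step_Lap_le : beta * norm2 L <= Num.min (nu0 * norm2 r ^+ 2) nu1.
Proof.
rewrite /beta_step; case: ifPn => [L_neq0 | /negPn/eqP ->]; last first.
  by rewrite norm2_0 mulr0 le_min mulr_ge0 ?sqr_ge0.
have L_gt0 : 0 < norm2 L.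
  by rewrite lt0r norm2_ge0 andbT; apply: contraNneq L_neq0 => /norm2_eq0 ->.
set b := Num.min _ nu2.
have bX : b <= nu0 * norm2 r ^+ 2 / norm2 L by rewrite !ge_min lexx.
have bY : b <= nu1 / norm2 L by rewrite !ge_min lexx orbT.
have L_neq0' := lt0r_neq0 L_gt0.
rewrite le_min; apply/andP; split.
  by apply: le_trans (ler_wpM2r (ltW L_gt0) bX) _; rewrite divfK.
by apply: le_trans (ler_wpM2r (ltW L_gt0) bY) _; rewrite divfK.
Qed.

End StepSizes.

Lemma step_fixed (R : realType) (m p q : nat) (A : 'M[R]_(m, p * q)) (Rr sigma : R) d
    (eta0 eta1 nu0 nu1 nu2 : R) y u :
  0 <= nu0 -> 0 <= nu1 -> 0 <= nu2 -> A *m u = y ->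
  step A Rr sigma d eta0 eta1 nu0 nu1 nu2 y u = u.
Proof.
move=> nu0_ge0 nu1_ge0 nu2_ge0 Au; rewrite /step Au subrr mulmx0 scaler0 subr0.
set b := beta_step _ _ _ _ _ _ _ _ _; set L := Lap _ _ _ _ *m _.
have : b * norm2 L <= Num.min (nu0 * norm2 (A *m u - y) ^+ 2) nu1.
  exact: beta_step_Lap_le.
rewrite Au subrr norm2_0 expr0n mulr0 le_min => /andP[bL_le0 _].
suff -> : b *: L = 0 by rewrite subr0.
apply: norm2_eq0; apply/eqP; rewrite eq_le norm2_ge0 andbT norm2Z ger0_norm //.
exact: beta_step_ge0.
Qed.

Section StepContinuity.
Variables (R : realType) (m p q : nat) (A : 'M[R]_(m, p * q))
  (Rr sigma : R) (d : 'I_p * 'I_q -> 'I_p * 'I_q -> R)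
  (eta0 eta1 nu0 nu1 nu2 : R).
Hypotheses (eta0_ge0 : 0 <= eta0) (eta1_ge0 : 0 <= eta1) (nu0_ge0 : 0 <= nu0)
  (nu1_ge0 : 0 <= nu1) (nu2_ge0 : 0 <= nu2).
Variables (T : Type) (F : set_system T).
Context {FF : Filter F}.
Variables (y : T -> 'cV[R]_m) (u : T -> 'cV[R]_(p * q)).
Variables (y0 : 'cV[R]_m) (u0 : 'cV[R]_(p * q)).
Hypotheses (y_cvg : y @ F --> y0) (u_cvg : u @ F --> u0).

Let r x := A *m u x - y x.
Let r0 := A *m u0 - y0.
Let g x := A^T *m r x.
Let g0 := A^T *m r0.
Let L x := Lap Rr sigma d (u x) *m u x.
Let L0 := Lap Rr sigma d u0 *m u0.

Lemma cvg_residual : r @ F --> r0.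
Proof. exact: cvgB (cvg_mulmx (M := A) u_cvg) y_cvg. Qed.

Lemma cvg_grad : g @ F --> g0.
Proof. exact: (cvg_mulmx (M := A^T) cvg_residual). Qed.

Lemma cvg_Lap_mul : L @ F --> L0.
Proof.
apply: cvg_col => a; rewrite /L /L0 Lap_mul_entry.
under eq_cvg do rewrite Lap_mul_entry.
apply: (@cvg_big _ _ +%R 0 predT add_continuous _ F _ _ _ FF) => b _.
have ue i : u x i 0 @[x --> F] --> u0 i 0 := cvg_entry (i := i) u_cvg.
have diff_cvg : u x a 0 - u x b 0 @[x --> F] --> u0 a 0 - u0 b 0 by apply: cvgB; apply: ue.
apply: (cvgM (f := fun x => wfun Rr sigma d (u x) a b) (g := fun x => u x a 0 - u x b 0)) => //.
rewrite /wfun /hfun; apply: (cvgM (f := fun=> gfun Rr d a b)); first exact: cvg_cst.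
apply: (@continuous_cvg _ _ _ F FF (fun x => - (u x a 0 - u x b 0) ^+ 2 / sigma) expR _
  (@continuous_expR R _)).
apply: (cvgM (f := fun x => - (u x a 0 - u x b 0) ^+ 2)) (cvg_cst _); apply: cvgN.
exact: (@continuous_cvg _ _ _ F FF (fun x => u x a 0 - u x b 0) (fun z => z ^+ 2) _
  (@exprn_continuous R 2 _) diff_cvg).
Qed.

Lemma cvg_norm2_sq k (f : T -> 'cV[R]_k) l :
  f @ F --> l -> norm2 (f x) ^+ 2 @[x --> F] --> norm2 l ^+ 2.
Proof.
move=> /cvg_norm2 fl.
exact: (@continuous_cvg _ _ _ F FF (fun x => norm2 (f x)) (fun z => z ^+ 2) _
  (@exprn_continuous R 2 _) fl).
Qed.

Lemma cvg_alpha_step : norm2 g0 != 0 ->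
  alpha_step A eta0 eta1 (y x) (u x) @[x --> F] --> alpha_step A eta0 eta1 y0 u0.
Proof.
move=> g0_neq0; have g0_gt0 : 0 < norm2 g0 by rewrite lt0r g0_neq0 norm2_ge0.
pose a x := eta0 * norm2 (r x) ^+ 2 / norm2 (g x) ^+ 2.
apply: (cvg_trans (G := (fun x => Num.min (a x) eta1) @ F)).
  apply: near_eq_cvg; apply: filterS (cvgr_gt _ (cvg_norm2 cvg_grad) _ g0_gt0) => x.
  by move=> /lt0r_neq0 gx_neq0; rewrite /alpha_step ifN.
rewrite /alpha_step ifN //.
apply: (cvg_min _ (cvg_cst _)).
apply: cvgM; first exact: cvgM (cvg_cst _) (cvg_norm2_sq cvg_residual).
by apply: cvgV; [rewrite sqrf_eq0 | exact: cvg_norm2_sq cvg_grad].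
Qed.

Lemma cvg_beta_step : L0 != 0 ->
  beta_step A Rr sigma d nu0 nu1 nu2 (y x) (u x) @[x --> F] -->
  beta_step A Rr sigma d nu0 nu1 nu2 y0 u0.
Proof.
move=> L0_neq0; have nL0_gt0 : 0 < norm2 L0.
  by rewrite lt0r norm2_ge0 andbT; apply: contraNneq L0_neq0 => /norm2_eq0 ->.
pose b x := Num.min (Num.min (nu0 * norm2 (r x) ^+ 2 / norm2 (L x)) (nu1 / norm2 (L x))) nu2.
apply: (cvg_trans (G := b @ F)).
  apply: near_eq_cvg; apply: filterS (cvgr_gt _ (cvg_norm2 cvg_Lap_mul) _ nL0_gt0) => x.
  rewrite /beta_step; case: ifPn => // /negPn/eqP Lx0.
  by rewrite /L Lx0 norm2_0 ltxx.
rewrite /beta_step ifT //.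
have inv_cvg : (norm2 (L x))^-1 @[x --> F] --> (norm2 L0)^-1.
  by apply: cvgV; [exact: lt0r_neq0 | exact: cvg_norm2 cvg_Lap_mul].
apply: (cvg_min _ (cvg_cst _)); apply: cvg_min.
  exact: cvgM (cvgM (cvg_cst _) (cvg_norm2_sq cvg_residual)) inv_cvg.
exact: cvgM (cvg_cst _) inv_cvg.
Qed.

Lemma cvg_step :
  step A Rr sigma d eta0 eta1 nu0 nu1 nu2 (y x) (u x) @[x --> F] -->
  step A Rr sigma d eta0 eta1 nu0 nu1 nu2 y0 u0.
Proof.
have alpha_grad_cvg : alpha_step A eta0 eta1 (y x) (u x) *: g x @[x --> F] -->
    alpha_step A eta0 eta1 y0 u0 *: g0.
  have [/norm2_eq0 g0_eq0 | g0_neq0] := eqVneq (norm2 g0) 0; last first.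
    exact: cvgZ (cvg_alpha_step g0_neq0) cvg_grad.
  rewrite g0_eq0 scaler0; apply: (cvg_scale_bounded0 (c := eta1)).
    by move=> x; rewrite ger0_norm ?alpha_step_ge0 ?alpha_step_le.
  by rewrite -g0_eq0; exact: cvg_grad.
have beta_Lap_cvg : beta_step A Rr sigma d nu0 nu1 nu2 (y x) (u x) *: L x @[x --> F] -->
    beta_step A Rr sigma d nu0 nu1 nu2 y0 u0 *: L0.
  have [L0_eq0 | L0_neq0] := eqVneq L0 0; last first.
    exact: cvgZ (cvg_beta_step L0_neq0) cvg_Lap_mul.
  rewrite L0_eq0 scaler0; apply: (cvg_scale_bounded0 (c := nu2)).
    by move=> x; rewrite ger0_norm ?beta_step_ge0 ?beta_step_le.
  by rewrite -L0_eq0; exact: cvg_Lap_mul.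
exact: cvgB (cvgB u_cvg alpha_grad_cvg) beta_Lap_cvg.
Qed.

End StepContinuity.

Lemma cvg_irmgl (R : realType) (m p q : nat) (A : 'M[R]_(m, p * q))
    (Psi : 'cV[R]_m -> 'cV[R]_(p * q)) (Rr sigma : R) d (eta0 eta1 nu0 nu1 nu2 : R)
    (T : Type) (F : set_system T) (FF : Filter F) (y : T -> 'cV[R]_m) y0 k :
  0 <= eta0 -> 0 <= eta1 -> 0 <= nu0 -> 0 <= nu1 -> 0 <= nu2 ->
  y @ F --> y0 -> Psi (y x) @[x --> F] --> Psi y0 ->
  irmgl A Psi Rr sigma d eta0 eta1 nu0 nu1 nu2 (y x) k @[x --> F] -->
  irmgl A Psi Rr sigma d eta0 eta1 nu0 nu1 nu2 y0 k.
Proof.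
move=> eta0_ge0 eta1_ge0 nu0_ge0 nu1_ge0 nu2_ge0 y_cvg Psi_cvg.
by elim: k => [|k IH] //; exact: cvg_step.
Qed.

Lemma exists_stop_index (R : realType) (m p q : nat) (A : 'M[R]_(m, p * q))
    (Psi : 'cV[R]_m -> 'cV[R]_(p * q)) (Rr sigma : R) d (eta0 eta1 nu0 nu1 nu2 tau delta : R)
    (y : 'cV[R]_m) :
  (exists k, norm2 (A *m irmgl A Psi Rr sigma d eta0 eta1 nu0 nu1 nu2 y k - y) <= tau * delta) ->
  exists k, is_stop_index A Psi Rr sigma d eta0 eta1 nu0 nu1 nu2 tau delta y k.
Proof.
case/ex_minnP => k reached_k first_k; exists k; split=> // j jk.
by rewrite ltNge; apply: contraTN jk => /first_k; rewrite -leqNgt.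
Qed.

Section Descent.
Variables (R : realType) (m p q : nat) (A : 'M[R]_(m, p * q))
  (Psi : 'cV[R]_m -> 'cV[R]_(p * q)) (Rr sigma : R)
  (d : 'I_p * 'I_q -> 'I_p * 'I_q -> R) (eta0 eta1 nu0 nu1 nu2 eta tau wp : R).
Hypotheses (eta0_ge0 : 0 <= eta0) (eta1_ge0 : 0 <= eta1) (nu0_ge0 : 0 <= nu0)
  (nu1_ge0 : 0 <= nu1) (nu2_ge0 : 0 <= nu2) (eta_ge0 : 0 <= eta)
  (eta_opnorm : eta * opnorm A ^+ 2 <= eta0) (eta_le : eta <= eta1) (tau_gt1 : 1 < tau).
Let C := eta - eta1 / tau - nu0 * (wp + nu1) - eta0 * eta1.

Local Notation step := (step A Rr sigma d eta0 eta1 nu0 nu1 nu2).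
Local Notation it := (irmgl A Psi Rr sigma d eta0 eta1 nu0 nu1 nu2).

Lemma irmglS y k : it y k.+1 = step y (it y k).
Proof. by []. Qed.

Lemma step_energy y u uh delta :
  norm2 (y - A *m uh) <= delta -> tau * delta <= norm2 (A *m u - y) ->
  norm2 (u - uh) <= wp ->
  norm2 (step y u - uh) ^+ 2 <= norm2 (u - uh) ^+ 2 - 2 * C * norm2 (A *m u - y) ^+ 2.
Proof.
move=> noise discrepancy u_near.
set r := A *m u - y in discrepancy *; set g := A^T *m r.
set L := Lap Rr sigma d u *m u; set e := u - uh in u_near *.
set a := alpha_step A eta0 eta1 y u; set b := beta_step A Rr sigma d nu0 nu1 nu2 y u.
have a_ge : eta <= a by apply: alpha_step_ge.
have a_ge0 : 0 <= a := le_trans eta_ge0 a_ge.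
have a_le : a <= eta1 by apply: alpha_step_le.
have ag_le : a * norm2 g ^+ 2 <= eta0 * norm2 r ^+ 2 by apply: alpha_step_grad_le.
have b_ge0 : 0 <= b by apply: beta_step_ge0.
have [bL_le0 bL_le1] : b * norm2 L <= nu0 * norm2 r ^+ 2 /\ b * norm2 L <= nu1.
  by apply/andP; rewrite -le_min; apply: beta_step_Lap_le.
have -> : step y u - uh = e - (a *: g + b *: L).
  by rewrite /step -/r -/g -/L -/a -/b /e opprD addrA [LHS]addrAC (addrAC u).
set w := a *: g + b *: L.
have expand : norm2 (e - w) ^+ 2 = norm2 e ^+ 2 - 2 * (a * dot e g + b * dot e L) + norm2 w ^+ 2.
  by rewrite norm2_subsq /w dotDr !dotZr.
(* [A e = r + (y - A uh)] with [|y - A uh| <= delta <= |r| / tau] *)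
have gradient_term : (eta - eta1 / tau) * norm2 r ^+ 2 <= a * dot e g.
  have dot_eg : dot e g = norm2 r ^+ 2 + dot (y - A *m uh) r.
    by rewrite /g -dot_mulmx /e mulmxBr norm2_sq -dotDl /r addrA subrK.
  have tau_gt0 : 0 < tau by apply: lt_trans tau_gt1.
  have noise_r : - (norm2 r ^+ 2 / tau) <= dot (y - A *m uh) r.
    have dot_le : `|dot (y - A *m uh) r| <= delta * norm2 r.
      exact: le_trans (normr_dot_le _ _) (ler_wpM2r (norm2_ge0 _) noise).
    have : delta * norm2 r <= norm2 r ^+ 2 / tau.
      by rewrite ler_pdivlMr // mulrAC expr2 ler_wpM2r ?norm2_ge0 // mulrC.
    by move: dot_le; rewrite ler_norml => /andP[+ _]; lra.
  rewrite dot_eg mulrDr mulrBl.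
  have r2_ge0 : 0 <= norm2 r ^+ 2 by rewrite sqr_ge0.
  have : a * - (norm2 r ^+ 2 / tau) <= a * dot (y - A *m uh) r by rewrite ler_wpM2l.
  have : eta1 * (norm2 r ^+ 2 / tau) >= a * (norm2 r ^+ 2 / tau).
    by rewrite ler_wpM2r // divr_ge0 // ltW.
  have : eta * norm2 r ^+ 2 <= a * norm2 r ^+ 2 by rewrite ler_wpM2r.
  rewrite mulrN; nra.
have Lap_term : - (b * dot e L) <= wp * nu0 * norm2 r ^+ 2.
  rewrite -mulrN -dotNl; apply: le_trans (ler_norm _) _.
  rewrite normrM ger0_norm // -mulrA; apply: le_trans (ler_wpM2l b_ge0 (normr_dot_le _ _)) _.
  rewrite norm2N mulrCA; apply: ler_pM => //; rewrite ?mulr_ge0 ?norm2_ge0 //.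
have step_sq : norm2 w ^+ 2 <= 2 * (eta0 * eta1 + nu0 * nu1) * norm2 r ^+ 2.
  have w_le : norm2 w <= a * norm2 g + b * norm2 L.
    by apply: le_trans (ler_norm2D _ _) _; rewrite !norm2Z !ger0_norm.
  have ag2 : (a * norm2 g) ^+ 2 <= eta1 * (eta0 * norm2 r ^+ 2).
    rewrite exprMn [a ^+ 2]expr2 -mulrA.
    by apply: ler_pM; rewrite ?mulr_ge0 ?norm2_ge0.
  have bL2 : (b * norm2 L) ^+ 2 <= nu1 * (nu0 * norm2 r ^+ 2).
    by rewrite expr2 mulrC ler_pM ?mulr_ge0 ?norm2_ge0.
  apply: le_trans (_ : (a * norm2 g + b * norm2 L) ^+ 2 <= _).
    by rewrite lerXn2r ?nnegrE ?norm2_ge0 // addr_ge0 ?mulr_ge0 ?norm2_ge0.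
  have := sqr_ge0 (a * norm2 g - b * norm2 L); nra.
rewrite expand /C; nra.
Qed.

Hypothesis C_gt0 : 0 < C.

Lemma irmgl_energy y uh delta K j :
  norm2 (y - A *m uh) <= delta -> norm2 (it y K - uh) <= wp ->
  (forall i, (K <= i < K + j)%N -> tau * delta <= norm2 (A *m it y i - y)) ->
  norm2 (it y (K + j) - uh) ^+ 2 + 2 * C * (j%:R * (tau * delta) ^+ 2)
    <= norm2 (it y K - uh) ^+ 2.
Proof.
move=> noise start_near; elim: j => [|j IH] discrepancy.
  by rewrite addn0 mul0r mulr0 addr0.
have {IH} IH : norm2 (it y (K + j) - uh) ^+ 2 + 2 * C * (j%:R * (tau * delta) ^+ 2)
    <= norm2 (it y K - uh) ^+ 2.
  by apply: IH => i /andP[Ki ij]; apply: discrepancy; rewrite Ki addnS ltnS ltnW.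
have delta_ge0 : 0 <= delta := le_trans (norm2_ge0 _) noise.
have tau_ge0 : 0 <= tau := ltW (lt_trans ltr01 tau_gt1).
have tau_delta_ge0 : 0 <= tau * delta by rewrite mulr_ge0.
have penalty_ge0 (n : nat) : 0 <= 2 * C * (n%:R * (tau * delta) ^+ 2).
  exact: mulr_ge0 (mulr_ge0 (ler0n _ 2) (ltW C_gt0)) (mulr_ge0 (ler0n _ _) (sqr_ge0 _)).
have res_K_j : tau * delta <= norm2 (A *m it y (K + j) - y).
  by rewrite discrepancy // leq_addr /= ltn_add2l.
have wp_ge0 : 0 <= wp := le_trans (norm2_ge0 _) start_near.
have near_K_j : norm2 (it y (K + j) - uh) <= wp.
  rewrite -ler_sqr ?nnegrE ?norm2_ge0 //.
  apply: le_trans (_ : norm2 (it y K - uh) ^+ 2 <= _); last first.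
    by rewrite ler_sqr ?nnegrE ?norm2_ge0.
  by apply: le_trans IH; rewrite lerDl.
have := step_energy noise res_K_j near_K_j.
have : C * (tau * delta) ^+ 2 <= C * norm2 (A *m it y (K + j) - y) ^+ 2.
  by rewrite ler_pM2l // lerXn2r ?nnegrE ?norm2_ge0.
rewrite addnS irmglS -natr1; lra.
Qed.

Lemma irmgl_dist_le y uh delta K j :
  norm2 (y - A *m uh) <= delta -> norm2 (it y K - uh) <= wp ->
  (forall i, (K <= i < K + j)%N -> tau * delta <= norm2 (A *m it y i - y)) ->
  norm2 (it y (K + j) - uh) <= norm2 (it y K - uh).
Proof.
move=> noise start_near /(irmgl_energy noise start_near) energy.
rewrite -ler_sqr ?nnegrE ?norm2_ge0 //; apply: le_trans energy; rewrite lerDl.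
exact: mulr_ge0 (mulr_ge0 (ler0n _ 2) (ltW C_gt0)) (mulr_ge0 (ler0n _ _) (sqr_ge0 _)).
Qed.

Variable udag : 'cV[R]_(p * q).
Hypotheses (wp_gt0 : 0 < wp) (start_near : norm2 (udag - Psi (A *m udag)) <= wp).

Local Notation v := (A *m udag).
Local Notation U := (irmgl A Psi Rr sigma d eta0 eta1 nu0 nu1 nu2 (A *m udag)).

Lemma noisefree_dist_le uh K j : A *m uh = v -> norm2 (U K - uh) <= wp ->
  norm2 (U (K + j) - uh) <= norm2 (U K - uh).
Proof.
move=> Auh near_K; apply: (@irmgl_dist_le _ _ 0) => //.
- by rewrite Auh subrr norm2_0.
- by move=> i _; rewrite mulr0 norm2_ge0.
Qed.

Lemma noisefree_near k : norm2 (U k - udag) <= wp.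
Proof.
have near_0 : norm2 (U 0 - udag) <= wp by rewrite norm2_distC.
exact: le_trans (noisefree_dist_le (K := 0) k erefl near_0) near_0.
Qed.

Lemma noisefree_residual_cvg0 : norm2 (A *m U k - v) @[k --> \oo] --> 0.
Proof.
pose E k := norm2 (U k - udag) ^+ 2.
have E_step k : E k.+1 <= E k - 2 * C * norm2 (A *m U k - v) ^+ 2.
  apply: (@step_energy _ _ _ 0); rewrite ?mulr0 ?norm2_ge0 ?noisefree_near //.
  by rewrite subrr norm2_0.
have C2_gt0 : 0 < 2 * C by rewrite mulr_gt0.
have E_noninc : nonincreasing_seq E.
  apply/nonincreasing_seqP => k; apply: le_trans (E_step k) _.
  by rewrite gerBl mulr_ge0 ?sqr_ge0 ?ltW.
have E_lb : has_lbound (range E) by exists 0 => _ [k _ <-]; exact: sqr_ge0.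
have E_diff_cvg0 : E k - E k.+1 @[k --> \oo] --> 0.
  have E_cvg := nonincreasing_cvgn E_noninc E_lb.
  have E_shift_cvg : E k.+1 @[k --> \oo] --> inf (E @` setT).
    by move: E_cvg; rewrite -(cvg_shiftS E).
  by rewrite -(subrr (inf (E @` setT))); apply: cvgB.
have res_sq_cvg0 : norm2 (A *m U k - v) ^+ 2 @[k --> \oo] --> 0.
  apply: (squeeze_cvgr (f := cst 0) (h := fun k => (E k - E k.+1) / (2 * C))).
  - near=> k; rewrite sqr_ge0 /= ler_pdivlMr // mulrC.
    by have := E_step k; lra.
  - exact: cvg_cst.
  - by rewrite -(mul0r (2 * C)^-1); apply: cvgM E_diff_cvg0 (cvg_cst _).
have -> : (fun k => norm2 (A *m U k - v)) = Num.sqrt \o (fun k => norm2 (A *m U k - v) ^+ 2).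
  by apply/funext => k /=; rewrite sqrtr_sqr ger0_norm ?norm2_ge0.
by rewrite -sqrtr0; exact: (continuous_cvg _ (@sqrt_continuous R 0)).
Unshelve. all: by end_near. Qed.

Lemma noisefree_limit : exists2 ub, A *m ub = v & U k @[k --> \oo] --> ub.
Proof.
have [ub ub_cluster] : exists ub, forall e, 0 < e -> forall N,
    exists2 k, (N <= k)%N & norm2 (U k - ub) < e.
  apply: (bounded_seq_cluster (M := wp + norm2 udag)) => k.
  by rewrite -{1}(subrK udag (U k)); apply: le_trans (ler_norm2D _ _) _;
    rewrite lerD2r noisefree_near.
have Aub : A *m ub = v.
  apply/eqP; rewrite -subr_eq0; apply/eqP/norm2_eq0/eqP.
  rewrite eq_le norm2_ge0 andbT; apply/ler_addgt0Pr => e e_gt0; rewrite add0r.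
  have c_gt0 : 0 < 2 * (opnorm A + 1) by rewrite mulr_gt0 // ltr_pwDr ?opnorm_ge0.
  have [N _ res_small] := cvgr_lt _ noisefree_residual_cvg0 _ (divr_gt0 e_gt0 (@ltr0Sn R 1)).
  have [k Nk Uk_near] := ub_cluster _ (divr_gt0 e_gt0 c_gt0) N.
  have -> : A *m ub - v = A *m (ub - U k) + (A *m U k - v) by rewrite mulmxBr addrA subrK.
  apply: le_trans (ler_norm2D _ _) _.
  have := res_small k Nk; have := ler_opnorm A (ub - U k); rewrite norm2_distC.
  have : opnorm A * norm2 (U k - ub) <= (opnorm A + 1) * (e / (2 * (opnorm A + 1))).
    by rewrite ler_pM ?opnorm_ge0 ?norm2_ge0 ?lerDl // ltW.
  have -> : (opnorm A + 1) * (e / (2 * (opnorm A + 1))) = e / 2.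
    by field; rewrite gt_eqF // ltr_pwDr ?opnorm_ge0.
  lra.
exists ub => //; apply/cvg_norm2P/cvgr0Pnorm_lt => e e_gt0.
have min_gt0 : 0 < Num.min e wp by rewrite lt_min e_gt0 wp_gt0.
have [k0 _] := ub_cluster _ min_gt0 0%N.
rewrite lt_min => /andP[k0_e k0_wp]; exists k0 => // k /= k0_le.
rewrite ger0_norm ?norm2_ge0 // -(subnKC k0_le).
exact: le_lt_trans (noisefree_dist_le _ Aub (ltW k0_wp)) k0_e.
Qed.

Lemma noisefree_fixed ub k : U n @[n --> \oo] --> ub -> A *m U k = v -> U k = ub.
Proof.
move=> U_cvg AUk.
have U_const j : U (k + j) = U k.
  elim: j => [|j IH]; first by rewrite addn0.
  by rewrite addnS irmglS IH step_fixed.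
have U_cvg_k : U n @[n --> \oo] --> U k.
  apply: cvg_trans (near_eq_cvg _) (cvg_cst (U k)).
  by near=> n; rewrite /= -(U_const (n - k)%N) subnKC //; near: n; exact: nbhs_infty_ge.
exact: cvg_unique U_cvg_k U_cvg.
Unshelve. all: by end_near. Qed.

Lemma discrepancy_reached y uh delta K : 0 < delta ->
  norm2 (y - A *m uh) <= delta -> norm2 (it y K - uh) <= wp ->
  exists k, norm2 (A *m it y k - y) <= tau * delta.
Proof.
move=> delta_gt0 noise start; apply/not_existsP => never.
have res_gt k : tau * delta <= norm2 (A *m it y k - y).
  by have /negP := never k; rewrite -ltNge => /ltW.
have c_gt0 : 0 < 2 * C * (tau * delta) ^+ 2.
  by rewrite !mulr_gt0 // (lt_trans ltr01).
pose N := (Num.trunc (wp ^+ 2 / (2 * C * (tau * delta) ^+ 2))).+1.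
have := irmgl_energy (j := N) noise start (fun i _ => res_gt i).
have : wp ^+ 2 < N%:R * (2 * C * (tau * delta) ^+ 2).
  by rewrite -ltr_pdivrMr //; exact: truncnS_gt.
have : norm2 (it y K - uh) ^+ 2 <= wp ^+ 2.
  by rewrite ler_sqr ?nnegrE ?norm2_ge0 // (le_trans (norm2_ge0 _) start).
have := sqr_ge0 (norm2 (it y (K + N) - uh)).
nra.
Qed.

Lemma stop_index_dist_le y uh delta K k :
  norm2 (y - A *m uh) <= delta -> norm2 (it y K - uh) <= wp -> (K <= k)%N ->
  is_stop_index A Psi Rr sigma d eta0 eta1 nu0 nu1 nu2 tau delta y k ->
  norm2 (it y k - uh) <= norm2 (it y K - uh).
Proof.
move=> noise start Kk [_ before_k]; rewrite -(subnKC Kk).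
by apply: (irmgl_dist_le noise start) => i /andP[_]; rewrite subnKC // => /before_k /ltW.
Qed.

Lemma stop_index_close y ub delta K e :
  0 < delta -> A *m ub = v -> norm2 (y - v) <= delta -> e <= wp ->
  norm2 (it y K - ub) < e ->
  (forall k, (k <= K)%N -> A *m U k = v \/ tau * delta < norm2 (A *m it y k - y)) ->
  (forall k, (k <= K)%N -> A *m U k = v -> norm2 (it y k - ub) < e) ->
  (exists k, is_stop_index A Psi Rr sigma d eta0 eta1 nu0 nu1 nu2 tau delta y k) /\
  (forall k, is_stop_index A Psi Rr sigma d eta0 eta1 nu0 nu1 nu2 tau delta y k ->
     norm2 (it y k - ub) < e).
Proof.
move=> delta_gt0 Aub noise e_le K_close early early_close; rewrite -Aub in noise.
have K_near : norm2 (it y K - ub) <= wp := ltW (lt_le_trans K_close e_le).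
split; first exact: exists_stop_index (discrepancy_reached delta_gt0 noise K_near).
move=> k stop_k; have [kK | Kk] := leqP k K.
  case: (early k kK) => [AUk | res_gt]; first exact: early_close.
  by case: stop_k => + _; rewrite leNgt res_gt.
exact: le_lt_trans (stop_index_dist_le noise K_near (ltnW Kk) stop_k) K_close.
Qed.

Variable vd : R -> 'cV[R]_m.
Hypotheses (vd_noise : \forall delta \near 0^'+, norm2 (vd delta - v) <= delta)
  (Psi_cvg : Psi (vd delta) @[delta --> 0^'+] --> Psi v).

Lemma noisy_data_cvg : vd delta @[delta --> 0^'+] --> v.
Proof.
apply/cvg_norm2P.
apply: (squeeze_cvgr (f := cst 0) (h := id) (g := fun delta => norm2 (vd delta - v))).
- by apply: filterS vd_noise => delta noise; rewrite norm2_ge0.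
- exact: cvg_cst.
- exact: cvg_at_right_filter cvg_id.
Qed.

Lemma irmgl_noisy_cvg k : it (vd delta) k @[delta --> 0^'+] --> U k.
Proof. exact: cvg_irmgl noisy_data_cvg Psi_cvg. Qed.

Lemma near_discrepancy k : \forall delta \near 0^'+,
  A *m U k = v \/ tau * delta < norm2 (A *m it (vd delta) k - vd delta).
Proof.
have [AUk | AUk_neq] := eqVneq (A *m U k) v; first by near=> delta; left.
set rho := norm2 (A *m U k - v).
have rho_gt0 : 0 < rho.
  by rewrite lt0r norm2_ge0 andbT; apply: contra_neq AUk_neq => /norm2_eq0/subr0_eq.
have res_cvg : norm2 (A *m it (vd delta) k - vd delta) @[delta --> 0^'+] --> rho.
  exact: cvg_norm2 (cvgB (cvg_mulmx (M := A) (irmgl_noisy_cvg (k := k))) noisy_data_cvg).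
near=> delta; right.
have : rho / 2 < norm2 (A *m it (vd delta) k - vd delta).
  by near: delta; apply: (cvgr_gt _ res_cvg); rewrite ltr_pdivrMr // ltr_pMr // ltr1n.
have : tau * delta < rho / 2.
  rewrite -ltr_pdivlMl ?(lt_trans ltr01) //; near: delta.
  by apply: nbhs_right_lt; rewrite mulr_gt0 ?invr_gt0 ?divr_gt0 // (lt_trans ltr01).
lra.
Unshelve. all: by end_near. Qed.

Lemma irmgl_stop_cvg : exists2 ub, A *m ub = v & forall eps, 0 < eps ->
  \forall delta \near 0^'+,
    (exists k, is_stop_index A Psi Rr sigma d eta0 eta1 nu0 nu1 nu2 tau delta (vd delta) k) /\
    (forall k, is_stop_index A Psi Rr sigma d eta0 eta1 nu0 nu1 nu2 tau delta (vd delta) k ->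
       norm2 (it (vd delta) k - ub) < eps).
Proof.
have [ub Aub U_cvg] := noisefree_limit; exists ub => // eps eps_gt0.
set e := Num.min eps wp.
have e_gt0 : 0 < e by rewrite lt_min eps_gt0 wp_gt0.
have e2_gt0 : 0 < e / 2 by rewrite divr_gt0.
have e2_le : e / 2 <= e by rewrite ler_pdivrMr // ler_pMr // ler1n.
have [K _ /(_ K (leqnn K)) K_close] := cvg_norm2_lt U_cvg e2_gt0.
have it_close k : \forall delta \near 0^'+, norm2 (it (vd delta) k - U k) < e / 2.
  exact: (@cvg_norm2_lt R R 0^'+ _ (p * q) _ _ (irmgl_noisy_cvg (k := k)) _ e2_gt0).
have early_near : \forall delta \near 0^'+, forall k, (k <= K)%N ->
    A *m U k = v \/ tau * delta < norm2 (A *m it (vd delta) k - vd delta).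
  exact: near_forall_leq near_discrepancy.
have close_near : \forall delta \near 0^'+, forall k, (k <= K)%N ->
    norm2 (it (vd delta) k - U k) < e / 2.
  exact: near_forall_leq it_close.
near=> delta.
have delta_gt0 : 0 < delta by near: delta; exact: nbhs_right_gt.
have noise : norm2 (vd delta - v) <= delta by near: delta; exact: vd_noise.
have e_le : e <= wp by rewrite ge_min lexx orbT.
have close_K : norm2 (it (vd delta) K - ub) < e.
  rewrite -(subrK (U K) (it _ _)) -addrA; apply: le_lt_trans (ler_norm2D _ _) _.
  have : norm2 (it (vd delta) K - U K) < e / 2.
    by near: delta; exact: it_close.
  move: K_close; lra.
have early : forall k, (k <= K)%N ->
    A *m U k = v \/ tau * delta < norm2 (A *m it (vd delta) k - vd delta).
  by near: delta; exact: early_near.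
have close_early k : (k <= K)%N -> A *m U k = v -> norm2 (it (vd delta) k - ub) < e.
  move=> kK /(noisefree_fixed U_cvg) <-; apply: lt_le_trans e2_le.
  by move: k kK; near: delta; exact: close_near.
have [stop_ex stop_close] :=
  stop_index_close delta_gt0 Aub noise e_le close_K early close_early.
split=> // k /stop_close /lt_le_trans; apply; rewrite ge_min lexx.
Unshelve. all: by end_near. Qed.

End Descent.

Unset Implicit Arguments.

Theorem theorem3p13 (R : realType) (m p q : nat)
  (A : 'M[R]_(m, p * q)) (Psi : 'cV[R]_m -> 'cV[R]_(p * q))
  (Rr sigma : R) (d : 'I_p * 'I_q -> 'I_p * 'I_q -> R)
  (eta0 eta1 nu0 nu1 nu2 eta tau wp : R)
  (udag : 'cV[R]_(p * q)) (vd : R -> 'cV[R]_m) :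
  0 < Rr -> 0 < sigma -> is_distance d ->
  0 < eta0 -> 0 < eta1 -> 0 < nu0 -> 0 < nu1 -> 0 < nu2 ->
  0 < eta -> eta * opnorm A ^+ 2 <= eta0 -> eta <= eta1 ->
  1 < tau ->
  0 < wp -> norm2 (udag - Psi (A *m udag)) <= wp ->
  (forall delta, 0 < delta -> norm2 (vd delta - A *m udag) <= delta) ->
  (forall eps, 0 < eps -> exists delta0, 0 < delta0 /\
     forall delta, 0 < delta -> delta < delta0 ->
       norm2 (Psi (vd delta) - Psi (A *m udag)) < eps) ->
  0 < eta - eta1 / tau - nu0 * (wp + nu1) - eta0 * eta1 ->
  exists usol : 'cV[R]_(p * q),
    A *m usol = A *m udag /\
    forall eps, 0 < eps -> exists delta0, 0 < delta0 /\
      forall delta, 0 < delta -> delta < delta0 ->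
        (exists k, is_stop_index A Psi Rr sigma d eta0 eta1 nu0 nu1 nu2 tau delta (vd delta) k) /\
        (forall k, is_stop_index A Psi Rr sigma d eta0 eta1 nu0 nu1 nu2 tau delta (vd delta) k ->
           norm2 (irmgl A Psi Rr sigma d eta0 eta1 nu0 nu1 nu2 (vd delta) k - usol) < eps).
Proof.
move=> _ _ _ /ltW eta0_ge0 /ltW eta1_ge0 /ltW nu0_ge0 /ltW nu1_ge0 /ltW nu2_ge0 /ltW eta_ge0.
move=> eta_opnorm eta_le tau_gt1 wp_gt0 start noise Psi_near C_gt0.
have vd_noise : \forall delta \near 0^'+, norm2 (vd delta - A *m udag) <= delta.
  by apply/near_at_right0P; exists 1; split=> // delta delta_gt0 _; exact: noise.
have Psi_cvg : Psi (vd delta) @[delta --> 0^'+] --> Psi (A *m udag).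
  apply/cvg_norm2P/cvgr0Pnorm_lt => e /Psi_near Psi_close; apply/near_at_right0P.
  by case: Psi_close => d0 [d0_gt0 close]; exists d0; split=> // delta *; rewrite ger0_norm ?norm2_ge0 ?close.
have [ub Aub stop_cvg] := irmgl_stop_cvg Rr sigma d eta0_ge0 eta1_ge0 nu0_ge0 nu1_ge0 nu2_ge0 eta_ge0
  eta_opnorm eta_le tau_gt1 C_gt0 wp_gt0 start vd_noise Psi_cvg.
by exists ub; split=> // eps /stop_cvg /near_at_right0P.
Qed.
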